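(* Let $\Lambda$ be a finitely aligned left cancellative small category. Suppose $\alpha,\beta\in\Lambda$ with $s(\alpha)=s(\beta)$ and $\alpha\beta^*\in S_\Lambda^{\mathrm{Iso}}$, and that $\delta\in\Lambda$ satisfies $\delta\Lambda\subseteq\alpha\Lambda\cap\beta\Lambda$. Then $\delta^*\alpha\beta^*\delta=\bigcup_{i=1}^n\delta_i\alpha_i^*$ for some $\delta_i,\alpha_i\in\Lambda$ such that $\{\delta_i\}_{i=1}^n$ and $\{\alpha_i\}_{i=1}^n$ are exhaustive, and hence $\delta^*\alpha\beta^*\delta\in F_\Lambda$.
   Context: $\Lambda$ is a left cancellative small category (objects $\Lambda^0$, range $r$, source $s$), finitely aligned (each $\alpha\Lambda\cap\beta\Lambda$ is a finite union of $f\Lambda$'s, $\alpha\Lambda=\{\alpha\beta:s(\alpha)=r(\beta)\}$). Each $\alpha\in\Lambda$ is the partial bijection $s(\alpha)\Lambda\to\alpha\Lambda$, $\beta\mapsto\alpha\beta$, in the symmetric inverse monoid $\mathcal{I}(\Lambda)$, with inverse $\alpha^*$; $S_\Lambda$ is the inverse semigroup they generate; $\bigcup$ is union of partial maps. $S_\Lambda^{\mathrm{Iso}}=\{s:ses^*e\neq0\text{ for every idempotent }0\neq e\leqslant s^*s\}$. For $x\in\Lambda^0$, $B\subseteq x\Lambda$ is exhaustive (at $x$) if every $\alpha\in x\Lambda$ has $\alpha\Lambda\cap\beta\Lambda\neq\emptyset$ for some $\beta\in B$. $F_\Lambda=\{\bigcup_{i=1}^n\alpha_i\beta_i^*\in S_\Lambda^{\mathrm{Iso}}:\alpha_i,\beta_i\in\Lambda,\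 \{\alpha_i\},\{\beta_i\}\text{ exhaustive}\}\cup\{0\}$. *)

From Stdlib Require Import List.
Import ListNotations.

(** A small category with range [rng] and source [src]; [cmp a b] is the
    composite "a b" (first b, then a), meaningful when [src a = rng b]. *)
Record Cat := {
  Ob : Type;
  Mor : Type;
  rng : Mor -> Ob;
  src : Mor -> Ob;
  cmp : Mor -> Mor -> Mor;
  idm : Ob -> Mor;
  rng_cmp : forall a b, src a = rng b -> rng (cmp a b) = rng a;
  src_cmp : forall a b, src a = rng b -> src (cmp a b) = src b;
  cmpA : forall a b c, src a = rng b -> src b = rng c ->
           cmp (cmp a b) c = cmp a (cmp b c);
  rng_idm : forall x, rng (idm x) = x;
  src_idm : forall x, src (idm x) = x;
  idm_l : forall a, cmp (idm (rng a)) a = a;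
  idm_r : forall a, cmp a (idm (src a)) = a
}.

Section Defs.
Variable L : Cat.
Notation M := (Mor L).

Definition left_cancellative : Prop :=
  forall a b c, src L a = rng L b -> src L a = rng L c ->
    cmp L a b = cmp L a c -> b = c.

Definition mset (a : M) : M -> Prop :=
  fun g => exists b, src L a = rng L b /\ g = cmp L a b.

Definition oset (x : Ob L) : M -> Prop := fun g => rng L g = x.

Definition finitely_aligned : Prop :=
  forall a b, exists fs : list M,
    forall g, (mset a g /\ mset b g) <-> exists f, In f fs /\ mset f g.

(** Partial maps on M represented by their graphs: [p x y] means p(x) = y. *)
Definition pmap := M -> M -> Prop.

Definition emb (a : M) : pmap :=
  fun x y => src L a = rng L x /\ y = cmp L a x.

Definition pinv (p : pmap) : pmap := fun x y => p y x.

(** product p q = "p after q" *)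
Definition pmul (p q : pmap) : pmap := fun x z => exists y, q x y /\ p y z.

Definition pzero : pmap := fun _ _ => False.

Definition punion (ps : list pmap) : pmap :=
  fun x y => exists p, In p ps /\ p x y.

Inductive S_L : pmap -> Prop :=
  | S_gen : forall a, S_L (emb a)
  | S_inv : forall p, S_L p -> S_L (pinv p)
  | S_mul : forall p q, S_L p -> S_L q -> S_L (pmul p q).

Definition idempotent (e : pmap) : Prop := S_L e /\ pmul e e = e.

Definition ple (e f : pmap) : Prop := e = pmul f e.

Definition S_Iso (s : pmap) : Prop :=
  S_L s /\
  forall e, idempotent e -> e <> pzero -> ple e (pmul (pinv s) s) ->
    pmul (pmul (pmul s e) (pinv s)) e <> pzero.

Definition exhaustive_at (x : Ob L) (B : list M) : Prop :=
  (forall b, In b B -> oset x b) /\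
  forall a, oset x a -> exists b, In b B /\ exists g, mset a g /\ mset b g.

Definition exhaustive (B : list M) : Prop := exists x, exhaustive_at x B.

Definition usum (l : list (M * M)) : pmap :=
  punion (map (fun ab => pmul (emb (fst ab)) (pinv (emb (snd ab)))) l).

Definition F_L (t : pmap) : Prop :=
  t = pzero \/
  exists l : list (M * M),
    t = usum l /\ S_Iso t /\ exhaustive (map fst l) /\ exhaustive (map snd l).

End Defs.

From Stdlib Require Import List.
From Stdlib Require Import FunctionalExtensionality PropExtensionality Classical.
Import ListNotations.

(* Write δ = α α' = β β'.  Then δ^*αβ^*δ maps x to z exactly when β' x = α' z,
   so finite alignment of α' and β' presents it as a finite union of maps
   γ_i η_i^*, where α' γ_i = β' η_i runs over generators of α'Λ ∩ β'Λ.
   Exhaustiveness and the Iso property both rest on one fact: if e is a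
   nonzero idempotent living on s(δ)Λ, then δ e δ^* is a nonzero idempotent
   below ββ^*, the source idempotent of αβ^*, so its Iso property produces points
   u, u' in the domain of e with δ^*αβ^*δ(u') = u.  For e = θθ^* this says
   that θΛ meets some γ_iΛ and some η_iΛ. *)

Lemma relation_ext {A B : Type} (p q : A -> B -> Prop) :
  (forall x y, p x y <-> q x y) -> p = q.
Proof.
  intros H. apply functional_extensionality; intro x.
  apply functional_extensionality; intro y.
  apply propositional_extensionality, H.
Qed.

Lemma list_choice {A B : Type} (R : A -> B -> Prop) (fs : list A) :
  (forall f, In f fs -> exists p, R f p) ->
  exists l, (forall p, In p l -> exists f, In f fs /\ R f p) /\
            (forall f, In f fs -> exists p, In p l /\ R f p).
Proof.
  induction fs as [|f fs IH]; intros H.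
  - exists []. split; intros ? [].
  - destruct (H f (or_introl eq_refl)) as [p Hp].
    destruct IH as [l [H1 H2]]; [intros g Hg; apply H; right; exact Hg|].
    exists (p :: l). split.
    + intros q [<-|Hq]; [exists f; auto using in_eq|].
      destruct (H1 q Hq) as [g [? ?]]. exists g. auto using in_cons.
    + intros g [<-|Hg]; [exists p; auto using in_eq|].
      destruct (H2 g Hg) as [q [? ?]]. exists q. auto using in_cons.
Qed.

Section PartialMaps.
Variable L : Cat.

Local Notation M := (Mor L).
Local Notation src := (src L).
Local Notation rng := (rng L).
Local Notation cmp := (cmp L).
Local Notation mset := (mset L).
Local Notation emb := (emb L).
Local Notation pinv := (pinv L).
Local Notation pmul := (pmul L).
Local Notation pzero := (pzero L).
Local Notation S_L := (S_L L).

Definition functional (p : pmap L) : Prop :=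
  forall x y y', p x y -> p x y' -> y = y'.

Definition sub_identity (p : pmap L) : Prop := forall x y, p x y -> x = y.

Definition emb_star (a b : M) : pmap L := pmul (emb a) (pinv (emb b)).

Definition sandwich (d a b : M) : pmap L :=
  pmul (pmul (pmul (pinv (emb d)) (emb a)) (pinv (emb b))) (emb d).

Definition meets (a b : M) : Prop := exists g, mset a g /\ mset b g.

Lemma pzeroP (p : pmap L) : p <> pzero <-> exists x y, p x y.
Proof.
  split.
  - intros Hp. apply NNPP; intros Hno. apply Hp, relation_ext.
    intros x y; split; [intros H; apply Hno; eauto | intros []].
  - intros [x [y H]] Hz. rewrite Hz in H. exact H.
Qed.

Lemma pinv_pmul (p q : pmap L) : pinv (pmul p q) = pmul (pinv q) (pinv p).
Proof.
  apply relation_ext; intros x y; split; intros [m [h1 h2]]; exists m; auto.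
Qed.

Lemma functional_pmul (p q : pmap L) :
  functional p -> functional q -> functional (pmul p q).
Proof.
  intros Fp Fq x z z' [y [h1 h2]] [y' [h3 h4]].
  assert (y = y') as <- by (eapply Fq; eauto). eapply Fp; eauto.
Qed.

Lemma S_L_functional (hlc : left_cancellative L) (p : pmap L) :
  S_L p -> functional p /\ functional (pinv p).
Proof.
  induction 1 as [a|p _ [F I]|p q _ [F1 I1] _ [F2 I2]].
  - split.
    + intros x y y' [_ ->] [_ ->]. reflexivity.
    + intros x y y' [h1 ->] [h2 e]. eapply hlc; eauto.
  - split; assumption.
  - split; [|rewrite pinv_pmul]; apply functional_pmul; assumption.
Qed.

Lemma idempotent_sub_identity (hlc : left_cancellative L) (e : pmap L) :
  idempotent L e -> sub_identity e.
Proof.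
  intros [HS He] x y H. destruct (S_L_functional hlc e HS) as [F I].
  assert (H2 : pmul e e x y) by (rewrite He; exact H).
  destruct H2 as [m [h1 h2]]. assert (m = y) as -> by (eapply F; eauto).
  eapply I; eauto.
Qed.

Lemma sub_identity_mul_self (p : pmap L) : sub_identity p -> pmul p p = p.
Proof.
  intros Hp. apply relation_ext; intros x z; split.
  - intros [y [h1 h2]]. rewrite (Hp _ _ h1). exact h2.
  - intros h. exists x. pose proof (Hp _ _ h) as <-. auto.
Qed.

Lemma pinv_mul_sub_identity (p : pmap L) :
  functional (pinv p) -> sub_identity (pmul (pinv p) p).
Proof. intros I x y [k [h1 h2]]. eapply I; eauto. Qed.

Lemma ple_of_dom (e f : pmap L) :
  sub_identity f -> (forall x y, e x y -> f y y) -> ple L e f.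
Proof.
  intros Hf Hdom. apply relation_ext; intros x z; split.
  - intros h. exists z. eauto.
  - intros [y [h1 h2]]. rewrite <- (Hf _ _ h2). exact h1.
Qed.

Lemma mset_refl (f : M) : mset f f.
Proof.
  exists (idm L (src f)). split; [symmetry; apply rng_idm | symmetry; apply idm_r].
Qed.

Lemma emb_star_intro (a b v : M) :
  src a = src b -> src b = rng v -> emb_star a b (cmp b v) (cmp a v).
Proof. intros hs hv. exists v. split; split; congruence. Qed.

Lemma emb_star_diag (g x y : M) : emb_star g g x y <-> x = y /\ mset g x.
Proof.
  split.
  - intros [m [[h1 ->] [_ ->]]]. split; [reflexivity | exists m; auto].
  - intros [<- [m [hm ->]]]. apply emb_star_intro; auto.
Qed.

Lemma emb_conj_char (d : M) (e : pmap L) : sub_identity e -> forall x y,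
  pmul (pmul (emb d) e) (pinv (emb d)) x y <->
  x = y /\ exists m, e m m /\ src d = rng m /\ x = cmp d m.
Proof.
  intros He x y; split.
  - intros [m [[h1 ->] [m' [hm [_ ->]]]]].
    pose proof (He _ _ hm) as <-. split; [reflexivity | exists m; auto].
  - intros [<- [m [hm [hsm ->]]]]. exists m. split; [split; auto|].
    exists m. repeat split; auto.
Qed.

Lemma usum_char (l : list (M * M)) x z :
  usum L l x z <-> exists p w, In p l /\ src (snd p) = rng w /\
    src (fst p) = rng w /\ x = cmp (snd p) w /\ z = cmp (fst p) w.
Proof.
  unfold usum, punion. split.
  - intros [q [Hq Hqxz]]. apply in_map_iff in Hq as [p [<- Hp]].
    destruct Hqxz as [w [[w1 w2] [w3 w4]]]. exists p, w. auto.
  - intros [p [w [Hp [w1 [w2 [w3 w4]]]]]].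
    exists (emb_star (fst p) (snd p)). split.
    + apply (in_map (fun ab => emb_star (fst ab) (snd ab))), Hp.
    + exists w. split; split; auto.
Qed.

Lemma exhaustive_at_map {A : Type} (f : A -> M) (l : list A) (x : Ob L) :
  (forall p, In p l -> rng (f p) = x) ->
  (forall g, rng g = x -> exists p, In p l /\ meets g (f p)) ->
  exhaustive_at L x (map f l).
Proof.
  intros Hrng Hmeet. split.
  - intros q Hq. apply in_map_iff in Hq as [p [<- Hp]]. apply Hrng, Hp.
  - intros g Hg. destruct (Hmeet g Hg) as [p [Hp Hm]].
    exists (f p). split; [apply in_map, Hp | exact Hm].
Qed.

Lemma finitely_aligned_common_extensions (hlc : left_cancellative L)
  (hfa : finitely_aligned L) (a' b' : M) :
  exists l : list (M * M),
    (forall p, In p l -> src a' = rng (fst p) /\ src b' = rng (snd p) /\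
       cmp a' (fst p) = cmp b' (snd p)) /\
    (forall x z, src a' = rng x -> src b' = rng z -> cmp a' x = cmp b' z ->
       exists p w, In p l /\ src (fst p) = rng w /\ src (snd p) = rng w /\
         x = cmp (fst p) w /\ z = cmp (snd p) w).
Proof.
  destruct (hfa a' b') as [fs Hfs].
  destruct (list_choice (fun f p => src a' = rng (fst p) /\ src b' = rng (snd p) /\
              f = cmp a' (fst p) /\ f = cmp b' (snd p)) fs) as [l [Hl1 Hl2]].
  { intros f Hf.
    destruct (proj2 (Hfs f) (ex_intro _ f (conj Hf (mset_refl f))))
      as [[x [hx1 hx2]] [z [hz1 hz2]]].
    exists (x, z). simpl. auto. }
  exists l. split.
  - intros p Hp. destruct (Hl1 p Hp) as [f [_ [r1 [r2 [<- <-]]]]]. auto.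
  - intros x z h1 h2 h3.
    destruct (proj1 (Hfs (cmp a' x))) as [f [Hf [w [hw1 hw2]]]].
    { split; [exists x | exists z]; auto. }
    destruct (Hl2 f Hf) as [p [Hp [r1 [r2 [r3 r4]]]]].
    assert (s1 : src f = src (fst p)) by (rewrite r3; apply src_cmp; auto).
    assert (s2 : src f = src (snd p)) by (rewrite r4; apply src_cmp; auto).
    exists p, w. repeat split; auto; try congruence.
    + apply (hlc a'); [congruence | rewrite rng_cmp by congruence; auto |].
      rewrite hw2, r3. apply cmpA; congruence.
    + apply (hlc b'); [congruence | rewrite rng_cmp by congruence; auto |].
      rewrite <- h3, hw2, r4. apply cmpA; congruence.
Qed.

Section Sandwich.
Hypothesis hlc : left_cancellative L.
Variables a b d : M.
Hypothesis hs : src a = src b.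

Local Notation T := (sandwich d a b).

Lemma sandwich_char x z :
  T x z <-> exists v, src d = rng x /\ src d = rng z /\ src b = rng v /\
    cmp d x = cmp b v /\ cmp a v = cmp d z.
Proof.
  split.
  - intros [y1 [[h1 ->] [v [[h2 h3] [y3 [[h4 ->] [h5 h6]]]]]]].
    exists v. auto.
  - intros [v [h1 [h2 [h3 [h4 h5]]]]].
    exists (cmp d x). split; [split; auto|].
    exists v. split; [split; auto|].
    exists (cmp a v). split; [split; [congruence | reflexivity] | split; auto].
Qed.

Section Factorization.
Variables a' b' : M.
Hypotheses (ha' : src a = rng a') (hda : d = cmp a a').
Hypotheses (hb' : src b = rng b') (hdb : d = cmp b b').

Lemma sandwich_factor_char x z :
  T x z <-> src d = rng x /\ src d = rng z /\ cmp b' x = cmp a' z.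
Proof.
  assert (sa : src d = src a') by (rewrite hda; apply src_cmp; auto).
  assert (sb : src d = src b') by (rewrite hdb; apply src_cmp; auto).
  rewrite sandwich_char. split.
  - intros [v [h1 [h2 [h3 [h4 h5]]]]]. repeat split; auto.
    transitivity v.
    + apply (hlc b); [rewrite rng_cmp by congruence; auto | auto |].
      rewrite <- cmpA, <- hdb by congruence. exact h4.
    + symmetry. apply (hlc a); [rewrite rng_cmp by congruence; auto | congruence |].
      rewrite <- cmpA, <- hda by congruence. symmetry. exact h5.
  - intros [h1 [h2 h3]]. exists (cmp b' x). repeat split; auto.
    + rewrite rng_cmp by congruence. auto.
    + rewrite hdb at 1. apply cmpA; congruence.
    + rewrite h3, hda. symmetry. apply cmpA; congruence.
Qed.

Lemma sandwich_eq_usum (l : list (M * M)) :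
  (forall p, In p l -> src a' = rng (fst p) /\ src b' = rng (snd p) /\
     cmp a' (fst p) = cmp b' (snd p)) ->
  (forall x z, src a' = rng x -> src b' = rng z -> cmp a' x = cmp b' z ->
     exists p w, In p l /\ src (fst p) = rng w /\ src (snd p) = rng w /\
       x = cmp (fst p) w /\ z = cmp (snd p) w) ->
  T = usum L l.
Proof.
  assert (sa : src d = src a') by (rewrite hda; apply src_cmp; auto).
  assert (sb : src d = src b') by (rewrite hdb; apply src_cmp; auto).
  intros Hsq Hgen. apply relation_ext; intros x z.
  rewrite sandwich_factor_char, usum_char. split.
  - intros [h1 [h2 h3]].
    destruct (Hgen z x) as [p [w [Hp [w1 [w2 [-> ->]]]]]]; try congruence.
    exists p, w. auto.
  - intros [p [w [Hp [w1 [w2 [-> ->]]]]]].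
    destruct (Hsq p Hp) as [r1 [r2 r3]].
    repeat split; try (rewrite rng_cmp by auto; congruence).
    rewrite <- !cmpA by congruence. congruence.
Qed.

End Factorization.

Hypothesis hiso : S_Iso L (emb_star a b).
Hypothesis hd : forall g, mset d g -> mset a g /\ mset b g.

Lemma sandwich_meets_sub_identity (e : pmap L) (u0 : M) :
  S_L e -> sub_identity e -> e u0 u0 -> src d = rng u0 ->
  exists u u', e u u /\ e u' u' /\ T u' u.
Proof.
  intros HS He Hu0 Hsu0.
  set (s := emb_star a b).
  set (e' := pmul (pmul (emb d) e) (pinv (emb d))).
  pose proof (emb_conj_char d e He) as Hchar.
  assert (He'sub : sub_identity e') by (intros x y h; apply Hchar in h; tauto).
  assert (He'idem : idempotent L e').
  { split; [|apply sub_identity_mul_self, He'sub].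
    apply S_mul; [apply S_mul; [apply S_gen | exact HS] | apply S_inv, S_gen]. }
  assert (He'nz : e' <> pzero).
  { apply pzeroP. exists (cmp d u0), (cmp d u0). apply Hchar. eauto. }
  assert (He'le : ple L e' (pmul (pinv s) s)).
  { apply ple_of_dom.
    - apply pinv_mul_sub_identity, (S_L_functional hlc).
      apply S_mul; [apply S_gen | apply S_inv, S_gen].
    - intros x y h. apply Hchar in h as [<- [m [_ [hsm ->]]]].
      destruct (hd (cmp d m)) as [_ [v [hv ->]]]; [exists m; auto|].
      exists (cmp a v). split; apply emb_star_intro; auto. }
  destruct hiso as [_ Hi].
  specialize (Hi e' He'idem He'nz He'le).
  apply pzeroP in Hi as [x [z [y [h1 [w [h2 [t [h3 _]]]]]]]].
  apply Hchar in h1 as [<- [m1 [hm1 [hsm1 ->]]]].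
  apply Hchar in h3 as [<- [m2 [hm2 [hsm2 ->]]]].
  destruct h2 as [v [[hv1 hv2] [hv3 hv4]]].
  exists m1, m2. repeat split; auto.
  apply sandwich_char. exists v. auto.
Qed.

Lemma sandwich_S_Iso : S_Iso L T.
Proof.
  split.
  - apply S_mul; [|apply S_gen].
    apply S_mul; [|apply S_inv, S_gen].
    apply S_mul; [apply S_inv, S_gen | apply S_gen].
  - intros e He Hnz Hle.
    pose proof (idempotent_sub_identity hlc e He) as Hsub.
    apply pzeroP in Hnz as [x [y Hxy]].
    rewrite <- (Hsub _ _ Hxy) in Hxy.
    assert (Hsx : src d = rng x).
    { assert (H : pmul (pmul (pinv T) T) e x x) by (rewrite <- Hle; exact Hxy).
      destruct H as [m [h1 [k [h2 _]]]]. rewrite <- (Hsub _ _ h1) in h2.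
      apply sandwich_char in h2 as [v [? _]]. auto. }
    destruct (sandwich_meets_sub_identity e x (proj1 He) Hsub Hxy Hsx)
      as [u [u' [hu [hu' hT]]]].
    apply pzeroP. exists u, u, u. split; auto.
    exists u'. split; auto. exists u'. auto.
Qed.

Lemma sandwich_usum_exhaustive (l : list (M * M)) :
  T = usum L l ->
  (forall p, In p l -> rng (fst p) = src d /\ rng (snd p) = src d) ->
  exhaustive L (map fst l) /\ exhaustive L (map snd l).
Proof.
  intros hT hrng.
  assert (Hmeet : forall g, rng g = src d ->
            exists p, In p l /\ meets g (fst p) /\ meets g (snd p)).
  { intros g Hg.
    destruct (sandwich_meets_sub_identity (emb_star g g) g)
      as [u [u' [hu [hu' hTu]]]]; auto.
    - apply S_mul; [apply S_gen | apply S_inv, S_gen].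
    - intros x y h. apply emb_star_diag in h. tauto.
    - apply emb_star_diag. split; [reflexivity | apply mset_refl].
    - rewrite hT in hTu.
      apply usum_char in hTu as [p [w [Hp [w1 [w2 [-> ->]]]]]].
      apply emb_star_diag in hu as [_ hu]. apply emb_star_diag in hu' as [_ hu'].
      exists p. split; [exact Hp|].
      split; [exists (cmp (fst p) w) | exists (cmp (snd p) w)];
        split; auto; exists w; auto. }
  split; exists (src d); apply exhaustive_at_map; try apply hrng;
    intros g Hg; destruct (Hmeet g Hg) as [p [? [? ?]]]; exists p; auto.
Qed.

End Sandwich.
End PartialMaps.

Theorem lemma4p9 (L : Cat) (hlc : left_cancellative L) (hfa : finitely_aligned L)
  (a b d : Mor L) (hs : src L a = src L b)
  (hiso : S_Iso L (pmul L (emb L a) (pinv L (emb L b))))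
  (hd : forall g, mset L d g -> mset L a g /\ mset L b g) :
  (exists l : list (Mor L * Mor L),
     pmul L (pmul L (pmul L (pinv L (emb L d)) (emb L a)) (pinv L (emb L b))) (emb L d)
       = usum L l /\
     exhaustive L (map fst l) /\ exhaustive L (map snd l)) /\
  F_L L (pmul L (pmul L (pmul L (pinv L (emb L d)) (emb L a)) (pinv L (emb L b))) (emb L d)).
Proof.
  fold (sandwich L d a b).
  destruct (hd d (mset_refl L d)) as [[a' [ha' hda]] [b' [hb' hdb]]].
  destruct (finitely_aligned_common_extensions L hlc hfa a' b') as [l [Hsq Hgen]].
  assert (hT : sandwich L d a b = usum L l)
    by (eapply sandwich_eq_usum; eauto).
  assert (hrng : forall p, In p l -> rng L (fst p) = src L d /\ rng L (snd p) = src L d).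
  { intros p Hp. destruct (Hsq p Hp) as [r1 [r2 _]].
    rewrite hda at 1; rewrite src_cmp by auto.
    rewrite hdb; rewrite src_cmp by auto. auto. }
  destruct (sandwich_usum_exhaustive L hlc a b d hs hiso hd l hT hrng) as [Hex1 Hex2].
  pose proof (sandwich_S_Iso L hlc a b d hs hiso hd) as HIso.
  split; [exists l | right; exists l]; rewrite <- hT; auto.
Qed.
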